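(* Let $\mathcal M=(V,E,c_V,L,\Theta)$ be a molecular graph and $\mathcal C_{\mathcal M}$ its conformational space. Suppose $\varphi,\psi\in\mathcal C_{\mathcal M}$ and $(v,w_1,w_2,w_3)\in E_3$ satisfy $O_\varphi(v,w_1,w_2,w_3)=-O_\psi(v,w_1,w_2,w_3)\neq 0$. Then $\varphi$ and $\psi$ lie in different path components of $\mathcal C_{\mathcal M}$. In particular, if $\mathcal C_{\mathcal M}\neq\emptyset$ and $\mathcal M$ is not planar, then $\mathcal C_{\mathcal M}$ is not path connected.
   Context: A molecular graph is a tuple $\mathcal M=(V,E,c_V,L,\Theta)$ where: $V$ is a finite set; $E\subseteq V\times V$ satisfies $(v,v)\notin E$ and $(v,w)\in E\iff (w,v)\in E$; $c_V:V\to\mathbb N$ is arbitrary; $L:E\to(0,\infty)$ with $L(v,w)=L(w,v)$; and $\Theta:E_2\to(0,\pi]$ with $\Theta(v,w_1,w_2)=\Theta(v,w_2,w_1)$, where $E_2=\{(v,w_1,w_2)\in V^3: (v,w_1),(v,w_2)\in E,\ w_1\neq w_2\}$. The geometric realisation of $\mathcal M$ is the metric graph obtained by gluing a segment $[0,L(e)]$ for each edge $e$ along the vertices. A configuration (embedding) of $\mathcal M$ is an injective continuous map $\varphi$ from the geometric realisation into $\mathbb R^3$ such that (i) the restriction of $\varphi$ to each edge is an isometric embedding, and (ii) for each $(v,w_1,w_2)\in E_2$ the angle at $\varphi(v)$ between the segments to $\varphi(w_1)$ and $\varphi(w_2)$ equals $\Theta(v,w_1,w_2)$. Such $\varphi$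 is determined by $(\varphi(v_1),\dots,\varphi(v_n))\in\mathbb R^{3n}$ where $V=\{v_1,\dots,v_n\}$; the conformational space $\mathcal C_{\mathcal M}$ is the set of all configurations, topologised as a subspace of $\mathbb R^{3n}$ via this injection. Let $E_3=\{(v,w_1,w_2,w_3)\in V^4:(v,w_i)\in E \text{ for } i=1,2,3,\ w_i\neq w_j \text{ for } i\neq j\}$. The orientation of $\varphi$ is $O_\varphi:E_3\to\{-1,0,1\}$, $O_\varphi(v,w_1,w_2,w_3)=\operatorname{sign}\big((\varphi(w_1)-\varphi(v))\cdot[(\varphi(w_2)-\varphi(v))\times(\varphi(w_3)-\varphi(v))]\big)$. A tuple in $E_3$ is planar if $O_\varphi$ vanishes on it for every (equivalently some) $\varphi\in\mathcal C_{\mathcal M}$, and $\mathcal M$ is planar if every tuple of $E_3$ is planar. *)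

From Stdlib Require Import Reals Lra ZArith.
Open Scope R_scope.

Record pt3 := P3 { px : R; py : R; pz : R }.

Definition vsub (a b : pt3) : pt3 := P3 (px a - px b) (py a - py b) (pz a - pz b).
Definition vdot (a b : pt3) : R := px a * px b + py a * py b + pz a * pz b.
Definition vcross (a b : pt3) : pt3 :=
  P3 (py a * pz b - pz a * py b) (pz a * px b - px a * pz b) (px a * py b - py a * px b).
Definition vnorm (a : pt3) : R := sqrt (vdot a a).
Definition vdist (a b : pt3) : R := vnorm (vsub a b).
Definition vlerp (a b : pt3) (t : R) : pt3 :=
  P3 ((1 - t) * px a + t * px b) ((1 - t) * py a + t * py b) ((1 - t) * pz a + t * pz b).
Definition vangle (a b : pt3) : R := acos (vdot a b / (vnorm a * vnorm b)).

(* Molecular graph with vertex set V = {0, ..., n-1}. *)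
Record molgraph := MolGraph {
  mg_n : nat;
  mg_E : nat -> nat -> Prop;
  mg_cV : nat -> nat;
  mg_L : nat -> nat -> R;
  mg_Th : nat -> nat -> nat -> R;
  mg_E_dom : forall v w, mg_E v w -> (v < mg_n)%nat /\ (w < mg_n)%nat;
  mg_E_irrefl : forall v, ~ mg_E v v;
  mg_E_sym : forall v w, mg_E v w <-> mg_E w v;
  mg_L_pos : forall v w, mg_E v w -> 0 < mg_L v w;
  mg_L_sym : forall v w, mg_E v w -> mg_L v w = mg_L w v;
  mg_Th_range : forall v w1 w2, mg_E v w1 -> mg_E v w2 -> w1 <> w2 ->
      0 < mg_Th v w1 w2 <= PI;
  mg_Th_sym : forall v w1 w2, mg_E v w1 -> mg_E v w2 -> w1 <> w2 ->
      mg_Th v w1 w2 = mg_Th v w2 w1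
}.

Definition inE2 (M : molgraph) (v w1 w2 : nat) : Prop :=
  mg_E M v w1 /\ mg_E M v w2 /\ w1 <> w2.

Definition inE3 (M : molgraph) (v w1 w2 w3 : nat) : Prop :=
  mg_E M v w1 /\ mg_E M v w2 /\ mg_E M v w3 /\
  w1 <> w2 /\ w1 <> w3 /\ w2 <> w3.

(* A configuration is given by the images phi v of the vertices v < n (values
   at other indices are irrelevant).  Points of the geometric realisation:
   a vertex, or an interior point of an edge (v,w) at parameter t in (0,1)
   (the point at distance t * L(v,w) from v).  The edge (v,w) at parameter t
   and the edge (w,v) at parameter 1-t are the same point. *)
Inductive rpoint :=
  | RVert (v : nat)
  | REdge (v w : nat) (t : R).

Definition rvalid (M : molgraph) (p : rpoint) : Prop :=
  match p with
  | RVert v => (v < mg_n M)%nat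
  | REdge v w t => mg_E M v w /\ 0 < t < 1
  end.

Definition rsame (p q : rpoint) : Prop :=
  match p, q with
  | RVert v, RVert v' => v = v'
  | REdge v w t, REdge v' w' t' =>
      (v = v' /\ w = w' /\ t = t') \/ (v = w' /\ w = v' /\ t = 1 - t')
  | _, _ => False
  end.

(* The map on the geometric realisation: on each edge it is the affine
   parametrisation of the segment [phi v, phi w], which is an isometric
   embedding of [0, L(v,w)] exactly when |phi v - phi w| = L(v,w). *)
Definition rimage (phi : nat -> pt3) (p : rpoint) : pt3 :=
  match p with
  | RVert v => phi v
  | REdge v w t => vlerp (phi v) (phi w) t
  end.

Definition is_config (M : molgraph) (phi : nat -> pt3) : Prop :=
  (forall v w, mg_E M v w -> vdist (phi v) (phi w) = mg_L M v w) /\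
  (forall p q, rvalid M p -> rvalid M q ->
      rimage phi p = rimage phi q -> rsame p q) /\
  (forall v w1 w2, inE2 M v w1 w2 ->
      vangle (vsub (phi w1) (phi v)) (vsub (phi w2) (phi v)) = mg_Th M v w1 w2).

Definition Rsign (x : R) : Z :=
  match Rcase_abs x with
  | left _ => (-1)%Z
  | right _ => if Req_EM_T x 0 then 0%Z else 1%Z
  end.

Definition orient (phi : nat -> pt3) (v w1 w2 w3 : nat) : Z :=
  Rsign (vdot (vsub (phi w1) (phi v))
              (vcross (vsub (phi w2) (phi v)) (vsub (phi w3) (phi v)))).

(* Two configurations, identified by their vertex tuples in R^{3n}. *)
Definition config_eq (M : molgraph) (phi psi : nat -> pt3) : Prop :=
  forall v, (v < mg_n M)%nat -> phi v = psi v.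

(* A path in C_M (subspace topology of R^{3n}, here with the equivalent
   max-over-vertices Euclidean metric) from phi to psi. *)
Definition config_path (M : molgraph) (phi psi : nat -> pt3) : Prop :=
  exists gamma : R -> nat -> pt3,
    config_eq M (gamma 0) phi /\ config_eq M (gamma 1) psi /\
    (forall t, 0 <= t <= 1 -> is_config M (gamma t)) /\
    (forall t0, 0 <= t0 <= 1 -> forall eps, 0 < eps -> exists delta, 0 < delta /\
       forall t, 0 <= t <= 1 -> Rabs (t - t0) < delta ->
         forall v, (v < mg_n M)%nat -> vdist (gamma t v) (gamma t0 v) < eps).

Definition path_connected_C (M : molgraph) : Prop :=
  forall phi psi, is_config M phi -> is_config M psi -> config_path M phi psi.

Definition planar_tuple (M : molgraph) (v w1 w2 w3 : nat) : Prop :=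
  forall phi, is_config M phi -> orient phi v w1 w2 w3 = 0%Z.

Definition planar (M : molgraph) : Prop :=
  forall v w1 w2 w3, inE3 M v w1 w2 w3 -> planar_tuple M v w1 w2 w3.

From Stdlib Require Import Reals ZArith Lra Psatz.
Open Scope R_scope.

(* The orientation of a star (v; w1, w2, w3) is the sign of the
   triple product of the three bond vectors w_i - v.  Its square is the Gram
   determinant of these vectors, and the Gram entries are fixed by the bond
   lengths L(v, w_i) and the bond angles Theta(v, w_i, w_j); hence the square
   of the triple product takes the same value in every configuration.  Along a
   path of configurations the triple product is a continuous function of time,
   so by the intermediate value theorem it cannot pass from one sign to the
   other without vanishing, and then its constant square would be 0, forcing
   both end values to vanish.  For the second,
   the mirror image (x, y, z) |-> (-x, y, z) of a configuration is again a
   configuration with every orientation reversed; so a non-planar star in some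
   configuration yields two configurations with opposite non-zero orientation,
   which by the first claim cannot be joined by a path. *)

Definition triple (a b c : pt3) : R := vdot a (vcross b c).

Lemma triple_sq_gram a b c :
  (triple a b c)^2 =
  vdot a a * (vdot b b * vdot c c - vdot b c * vdot b c)
  - vdot a b * (vdot a b * vdot c c - vdot b c * vdot a c)
  + vdot a c * (vdot a b * vdot b c - vdot b b * vdot a c).
Proof. destruct a, b, c; unfold triple, vdot, vcross; simpl; ring. Qed.

Lemma vdot_self_ge0 a : 0 <= vdot a a.
Proof. destruct a; unfold vdot; simpl; nra. Qed.

Lemma vdot_self_vnorm a : vdot a a = (vnorm a)^2.
Proof.
  unfold vnorm; rewrite <- Rsqr_pow2, Rsqr_sqrt; auto using vdot_self_ge0.
Qed.

(* Cauchy-Schwarz: the argument of acos in vangle lies in [-1, 1]. *)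
Lemma cauchy_schwarz a b : (vdot a b)^2 <= vdot a a * vdot b b.
Proof.
  destruct a as [x1 y1 z1], b as [x2 y2 z2]; unfold vdot; simpl.
  pose proof (Rle_0_sqr (x1 * y2 - y1 * x2));
  pose proof (Rle_0_sqr (x1 * z2 - z1 * x2));
  pose proof (Rle_0_sqr (y1 * z2 - z1 * y2)); unfold Rsqr in *; nra.
Qed.

Lemma vdot_cos_vangle a b : 0 < vnorm a -> 0 < vnorm b ->
  vdot a b = cos (vangle a b) * vnorm a * vnorm b.
Proof.
  intros Ha Hb; unfold vangle.
  assert (Hn : 0 < vnorm a * vnorm b) by nra.
  assert (Hbound : - (vnorm a * vnorm b) <= vdot a b <= vnorm a * vnorm b).
  { pose proof (cauchy_schwarz a b) as C; rewrite !vdot_self_vnorm in C.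
    split; nra. }
  rewrite cos_acos; [field; lra|].
  split; apply (Rmult_le_reg_r (vnorm a * vnorm b)); auto;
    unfold Rdiv; rewrite Rmult_assoc, Rinv_l by lra; lra.
Qed.

Lemma vnorm_vsub_sym a b : vnorm (vsub a b) = vnorm (vsub b a).
Proof. unfold vnorm; f_equal; destruct a, b; unfold vdot, vsub; simpl; ring. Qed.

Definition star_triple (phi : nat -> pt3) (v w1 w2 w3 : nat) : R :=
  triple (vsub (phi w1) (phi v)) (vsub (phi w2) (phi v)) (vsub (phi w3) (phi v)).

Definition star_gram (M : molgraph) (v w1 w2 w3 : nat) : R :=
  let L1 := mg_L M v w1 in let L2 := mg_L M v w2 in let L3 := mg_L M v w3 in
  let d12 := cos (mg_Th M v w1 w2) * L1 * L2 in
  let d13 := cos (mg_Th M v w1 w3) * L1 * L3 in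
  let d23 := cos (mg_Th M v w2 w3) * L2 * L3 in
  L1^2 * (L2^2 * L3^2 - d23 * d23) - d12 * (d12 * L3^2 - d23 * d13)
  + d13 * (d12 * d23 - L2^2 * d13).

Lemma star_triple_sq (M : molgraph) phi v w1 w2 w3 :
  is_config M phi -> inE3 M v w1 w2 w3 ->
  (star_triple phi v w1 w2 w3)^2 = star_gram M v w1 w2 w3.
Proof.
  intros [Hlen [_ Hang]] (E1 & E2 & E3 & n12 & n13 & n23).
  assert (Hnorm : forall w, mg_E M v w ->
            vnorm (vsub (phi w) (phi v)) = mg_L M v w).
  { intros w Ew; rewrite vnorm_vsub_sym; apply Hlen; auto. }
  assert (Hdot : forall w w', mg_E M v w -> mg_E M v w' -> w <> w' ->
     vdot (vsub (phi w) (phi v)) (vsub (phi w') (phi v)) =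
     cos (mg_Th M v w w') * mg_L M v w * mg_L M v w').
  { intros w w' Ew Ew' nw.
    rewrite vdot_cos_vangle by (rewrite Hnorm; auto using mg_L_pos).
    rewrite Hang by (repeat split; auto); rewrite !Hnorm by auto; reflexivity. }
  unfold star_triple; rewrite triple_sq_gram, !vdot_self_vnorm, !Hnorm by auto.
  rewrite !Hdot by auto; reflexivity.
Qed.

Lemma constant_square_no_sign_change (F : R -> R) :
  continuity F -> (forall t, 0 <= t <= 1 -> F t ^ 2 = F 0 ^ 2) ->
  ~ F 0 * F 1 < 0.
Proof.
  intros HF Hsq Hneg.
  destruct (IVT_cor F 0 1 HF ltac:(lra) ltac:(lra)) as [z [Hz Fz]].
  specialize (Hsq z Hz); rewrite Fz in Hsq.
  assert (F 0 = 0) by nra; nra.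
Qed.

Definition path_continuous (n : nat) (gamma : R -> nat -> pt3) : Prop :=
  forall t0, 0 <= t0 <= 1 -> forall eps, 0 < eps -> exists delta, 0 < delta /\
    forall t, 0 <= t <= 1 -> Rabs (t - t0) < delta ->
      forall v, (v < n)%nat -> vdist (gamma t v) (gamma t0 v) < eps.

(* Retraction of R onto [0, 1]; it extends a path to a function on all of R,
   as required by the intermediate value theorem of the library. *)
Definition clamp01 (t : R) : R := Rmin 1 (Rmax 0 t).

Lemma clamp01_range t : 0 <= clamp01 t <= 1.
Proof. unfold clamp01, Rmin, Rmax; repeat destruct Rle_dec; lra. Qed.

Lemma clamp01_lipschitz t s : Rabs (clamp01 t - clamp01 s) <= Rabs (t - s).
Proof.
  unfold clamp01, Rmin, Rmax; repeat destruct Rle_dec; unfold Rabs;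
  repeat destruct Rcase_abs; lra.
Qed.

Lemma clamp01_id t : 0 <= t <= 1 -> clamp01 t = t.
Proof. unfold clamp01, Rmin, Rmax; repeat destruct Rle_dec; lra. Qed.

Lemma coords_lipschitz a b :
  Rabs (px a - px b) <= vdist a b /\ Rabs (py a - py b) <= vdist a b /\
  Rabs (pz a - pz b) <= vdist a b.
Proof.
  unfold vdist, vnorm, vdot, vsub; simpl.
  repeat split; rewrite <- sqrt_Rsqr_abs; apply sqrt_le_1_alt; unfold Rsqr;
  match goal with |- _ <= ?a * ?a + ?b * ?b + ?c * ?c =>
    pose proof (Rle_0_sqr a); pose proof (Rle_0_sqr b);
    pose proof (Rle_0_sqr c) end;
  unfold Rsqr in *; lra.
Qed.

Lemma lipschitz_observable_continuous n gamma v (f : pt3 -> R) :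
  (forall a b, Rabs (f a - f b) <= vdist a b) -> (v < n)%nat ->
  path_continuous n gamma -> continuity (fun t => f (gamma (clamp01 t) v)).
Proof.
  intros Hf Hv Hc a eps He.
  destruct (Hc (clamp01 a) (clamp01_range a) eps He) as [d [Hd Hnear]].
  exists d; split; auto; intros x [_ Hx]; simpl in *; unfold R_dist in *.
  eapply Rle_lt_trans; [apply Hf|].
  apply Hnear; auto using clamp01_range.
  eapply Rle_lt_trans; [apply clamp01_lipschitz | exact Hx].
Qed.

Lemma star_triple_continuous n gamma v w1 w2 w3 :
  path_continuous n gamma -> (v < n)%nat -> (w1 < n)%nat -> (w2 < n)%nat ->
  (w3 < n)%nat -> continuity (fun t => star_triple (gamma (clamp01 t)) v w1 w2 w3).
Proof.
  intros Hc Hv Hw1 Hw2 Hw3.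
  assert (Hcoord : forall w, (w < n)%nat ->
    continuity (fun t => px (gamma (clamp01 t) w)) /\
    continuity (fun t => py (gamma (clamp01 t) w)) /\
    continuity (fun t => pz (gamma (clamp01 t) w))).
  { intros w Hw; repeat split; eapply lipschitz_observable_continuous; eauto;
      intros; apply coords_lipschitz. }
  destruct (Hcoord v Hv) as (a1 & a2 & a3).
  destruct (Hcoord w1 Hw1) as (b1 & b2 & b3).
  destruct (Hcoord w2 Hw2) as (c1 & c2 & c3).
  destruct (Hcoord w3 Hw3) as (d1 & d2 & d3).
  unfold star_triple, triple, vdot, vcross, vsub; simpl.
  repeat first [ apply continuity_plus | apply continuity_minus
               | apply continuity_mult | apply continuity_opp ]; assumption.
Qed.

Lemma Rsign_opposite_product x y :
  Rsign x = (- Rsign y)%Z -> Rsign x <> 0%Z -> x * y < 0.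
Proof.
  unfold Rsign; destruct (Rcase_abs x), (Rcase_abs y);
  try destruct (Req_EM_T x 0); try destruct (Req_EM_T y 0); intros H1 H2;
  try discriminate; try (exfalso; apply H2; reflexivity); nra.
Qed.

Lemma opposite_orientation_no_path (M : molgraph) phi psi v w1 w2 w3 :
  is_config M phi -> is_config M psi -> inE3 M v w1 w2 w3 ->
  orient phi v w1 w2 w3 = (- orient psi v w1 w2 w3)%Z ->
  orient phi v w1 w2 w3 <> 0%Z ->
  ~ config_path M phi psi.
Proof.
  intros Cphi _ Hstar Hopp Hnz [gamma [G0 [G1 [Gconf Gcont]]]].
  pose proof Hstar as (E1 & E2 & E3 & _).
  destruct (mg_E_dom M v w1 E1) as [Hv Hw1].
  destruct (mg_E_dom M v w2 E2) as [_ Hw2].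
  destruct (mg_E_dom M v w3 E3) as [_ Hw3].
  set (F := fun t => star_triple (gamma (clamp01 t)) v w1 w2 w3).
  assert (F0 : F 0 = star_triple phi v w1 w2 w3).
  { unfold F, star_triple; rewrite clamp01_id by lra; rewrite !G0; auto. }
  assert (F1 : F 1 = star_triple psi v w1 w2 w3).
  { unfold F, star_triple; rewrite clamp01_id by lra; rewrite !G1; auto. }
  apply (constant_square_no_sign_change F).
  - exact (star_triple_continuous _ _ _ _ _ _ Gcont Hv Hw1 Hw2 Hw3).
  - intros t Ht; rewrite F0; unfold F.
    rewrite (star_triple_sq M _ _ _ _ _ (Gconf _ (clamp01_range t)) Hstar).
    symmetry; exact (star_triple_sq M _ _ _ _ _ Cphi Hstar).
  - rewrite F0, F1; exact (Rsign_opposite_product _ _ Hopp Hnz).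
Qed.

Definition mirror (p : pt3) : pt3 := P3 (- px p) (py p) (pz p).

Lemma mirror_vsub a b : vsub (mirror a) (mirror b) = mirror (vsub a b).
Proof. destruct a, b; unfold mirror, vsub; simpl; f_equal; ring. Qed.

Lemma mirror_vdot a b : vdot (mirror a) (mirror b) = vdot a b.
Proof. destruct a, b; unfold mirror, vdot; simpl; ring. Qed.

Lemma mirror_vlerp a b t : vlerp (mirror a) (mirror b) t = mirror (vlerp a b t).
Proof. destruct a, b; unfold mirror, vlerp; simpl; f_equal; ring. Qed.

Lemma mirror_inj a b : mirror a = mirror b -> a = b.
Proof.
  destruct a, b; unfold mirror; simpl; intros H; injection H; intros;
  f_equal; lra.
Qed.

Lemma mirror_triple a b c : triple (mirror a) (mirror b) (mirror c) = - triple a b c.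
Proof. destruct a, b, c; unfold mirror, triple, vdot, vcross; simpl; ring. Qed.

Lemma mirror_config M phi : is_config M phi -> is_config M (fun v => mirror (phi v)).
Proof.
  intros [Hlen [Hinj Hang]]; split; [|split].
  - intros v w E; unfold vdist, vnorm; rewrite mirror_vsub, mirror_vdot; apply Hlen; auto.
  - intros p q Vp Vq Heq; apply Hinj; auto.
    destruct p, q; simpl in *; rewrite ?mirror_vlerp in Heq; apply mirror_inj; auto.
  - intros v w1 w2 H; unfold vangle, vnorm; rewrite !mirror_vsub, !mirror_vdot; apply Hang; auto.
Qed.

Lemma Rsign_opp x : Rsign (- x) = (- Rsign x)%Z.
Proof.
  unfold Rsign; destruct (Rcase_abs x), (Rcase_abs (- x));
  try destruct (Req_EM_T x 0); try destruct (Req_EM_T (- x) 0);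
  try reflexivity; lra.
Qed.

Lemma orient_mirror phi v w1 w2 w3 :
  orient (fun u => mirror (phi u)) v w1 w2 w3 = (- orient phi v w1 w2 w3)%Z.
Proof.
  unfold orient; rewrite !mirror_vsub.
  change (Rsign (triple (mirror (vsub (phi w1) (phi v)))
    (mirror (vsub (phi w2) (phi v))) (mirror (vsub (phi w3) (phi v))))
    = (- orient phi v w1 w2 w3)%Z).
  rewrite mirror_triple, Rsign_opp; reflexivity.
Qed.

Theorem mainTheorem1 (M : molgraph) :
  (forall (phi psi : nat -> pt3) (v w1 w2 w3 : nat),
     is_config M phi -> is_config M psi -> inE3 M v w1 w2 w3 ->
     orient phi v w1 w2 w3 = (- orient psi v w1 w2 w3)%Z ->
     orient phi v w1 w2 w3 <> 0%Z ->
     ~ config_path M phi psi) /\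
  ((exists phi, is_config M phi) -> ~ planar M -> ~ path_connected_C M).
Proof.
  split; [exact (opposite_orientation_no_path M)|].
  intros _ Hnonplanar Hconnected; apply Hnonplanar.
  intros v w1 w2 w3 Hstar phi Cphi.
  destruct (Z.eq_dec (orient phi v w1 w2 w3) 0) as [Hzero | Hnz]; auto.
  exfalso.
  pose proof (mirror_config M phi Cphi) as Cmirror.
  apply (opposite_orientation_no_path M phi _ v w1 w2 w3 Cphi Cmirror Hstar);
    [rewrite orient_mirror, Z.opp_involutive; reflexivity | exact Hnz |].
  exact (Hconnected _ _ Cphi Cmirror).
Qed.
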